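(* Let $\mathfrak n$ be a finite-dimensional 2-step nilpotent Lie algebra over a field $k$ of characteristic zero, with center $\mathfrak z$ and a linear complement $W$ of $\mathfrak z$ in $\mathfrak n$. Then $(\Lambda^2\mathfrak n)^{\mathfrak n}\subseteq (W\wedge\mathfrak z)\oplus\Lambda^2\mathfrak z$, i.e. every $\mathfrak n$-invariant element of $\Lambda^2\mathfrak n$ has zero component in $\Lambda^2W$ with respect to $\Lambda^2\mathfrak n=\Lambda^2W\oplus(W\wedge\mathfrak z)\oplus\Lambda^2\mathfrak z$.
   Context: 2-step nilpotent means $[\mathfrak n,[\mathfrak n,\mathfrak n]]=0$, so $[\mathfrak n,\mathfrak n]\subseteq\mathfrak z$. $\mathfrak n$ acts on $\Lambda^2\mathfrak n$ by $\mathrm{ad}_x(a\wedge b)=[x,a]\wedge b+a\wedge[x,b]$; $(\Lambda^2\mathfrak n)^{\mathfrak n}$ is the set of elements killed by all $\mathrm{ad}_x$. *)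

From HB Require Import structures.
From mathcomp Require Import all_boot all_order all_algebra.
Set Implicit Arguments. Unset Strict Implicit. Unset Printing Implicit Defensive.
Import GRing.Theory.
Local Open Scope ring_scope.

Definition is_lie_bracket (k : fieldType) (N : nat)
    (br : 'rV[k]_N -> 'rV[k]_N -> 'rV[k]_N) : Prop :=
  [/\ (forall x a y z, br x (a *: y + z) = a *: br x y + br x z),
      (forall y a x z, br (a *: x + z) y = a *: br x y + br z y),
      (forall x, br x x = 0) &
      (forall x y z, br x (br y z) + br y (br z x) + br z (br x y) = 0)].

Definition two_step_nilpotent (k : fieldType) (N : nat)
    (br : 'rV[k]_N -> 'rV[k]_N -> 'rV[k]_N) : Prop :=
  forall x y z, br x (br y z) = 0.

Definition central (k : fieldType) (N : nat)
    (br : 'rV[k]_N -> 'rV[k]_N -> 'rV[k]_N) (v : 'rV[k]_N) : Prop :=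
  forall x, br x v = 0.

Definition ad_mx (k : fieldType) (N : nat)
    (br : 'rV[k]_N -> 'rV[k]_N -> 'rV[k]_N) (x : 'rV[k]_N) : 'M[k]_N :=
  lin1_mx (br x).

(* Model of Lambda^2 n (char k = 0): skew-symmetric N x N matrices, where
   a /\ b is represented by a^T b - b^T a. *)
Definition wedge (k : fieldType) (N : nat) (a b : 'rV[k]_N) : 'M[k]_N :=
  a^T *m b - b^T *m a.

Definition in_Lambda2 (k : fieldType) (N : nat) (M : 'M[k]_N) : Prop :=
  M^T = - M.

(* Action of x on Lambda^2 n, the linear extension of
   ad_x (a /\ b) = [x,a] /\ b + a /\ [x,b]; in the model, D^T M + M D
   with D = ad_mx br x. *)
Definition ad_wedge (k : fieldType) (N : nat)
    (br : 'rV[k]_N -> 'rV[k]_N -> 'rV[k]_N) (x : 'rV[k]_N) (M : 'M[k]_N)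
    : 'M[k]_N :=
  (ad_mx br x)^T *m M + M *m ad_mx br x.

(* Component in Lambda^2 W of M w.r.t. Lambda^2 n = Lambda^2 W + (W /\ z)
   + Lambda^2 z: apply Lambda^2 of the projection P onto W along z,
   a /\ b |-> (aP) /\ (bP), i.e. M |-> P^T M P. *)
Definition Lambda2W_component (k : fieldType) (N : nat) (W Z M : 'M[k]_N)
    : 'M[k]_N :=
  let P := proj_mx W Z in P^T *m M *m P.

From HB Require Import structures.
From mathcomp Require Import all_boot all_order all_algebra.
Set Implicit Arguments. Unset Strict Implicit. Unset Printing Implicit Defensive.
Import GRing.Theory.
Local Open Scope ring_scope.

(* Let P be the projection onto W along z and, for x in n, D = ad_x.
   Two-step nilpotency puts the image of D in z, so D P = 0, while D kills z,
   so P D = D.  Multiplying the invariance equation D^T M + M D = 0 on the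
   left by P^T gives P^T M D = 0, hence A := P^T M P satisfies A D = 0 for
   every x: the rows of A are central.  Then A = A P = 0, because P is
   idempotent and vanishes on z. *)

Lemma proj_mx_compl_full (F : fieldType) n (U V : 'M[F]_n) :
  row_full (U + V)%MS -> (1%:M - proj_mx U V <= V)%MS.
Proof.
by move=> fullUV; rewrite -[proj_mx U V]mul1mx proj_mx_compl_sub ?submx_full.
Qed.

Lemma proj_mx_mul_id (F : fieldType) n p (U V : 'M[F]_n) (D : 'M_(n, p)) :
  row_full (U + V)%MS -> V *m D = 0 -> proj_mx U V *m D = D.
Proof.
move=> /proj_mx_compl_full /submxP[X defC] VD0; apply/eqP.
rewrite -subr_eq0 -oppr_eq0 opprB -{1}[D]mul1mx -mulmxBl defC.
by rewrite -mulmxA VD0 mulmx0.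
Qed.

Section AdjointAndCenter.

Variables (k : fieldType) (N : nat) (br : 'rV[k]_N -> 'rV[k]_N -> 'rV[k]_N).
Hypothesis br_linear : forall x a y z, br x (a *: y + z) = a *: br x y + br x z.

Lemma ad_mxE x u : u *m ad_mx br x = br x u.
Proof.
pose f : {linear 'rV[k]_N -> 'rV[k]_N} :=
  HB.pack (br x) (GRing.isLinear.Build _ _ _ _ (br x) (br_linear x)).
exact: (mul_rV_lin1 f).
Qed.

Variable Z : 'M[k]_N.
Hypothesis centerZ : forall v : 'rV[k]_N, (v <= Z)%MS <-> central br v.

Lemma sub_centerP m (B : 'M_(m, N)) :
  (B <= Z)%MS <-> (forall x, B *m ad_mx br x = 0).
Proof.
split=> [sBZ x | BD0].
  apply/row_matrixP => i; rewrite row_mul row0 ad_mxE.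
  by have /centerZ := submx_trans (row_sub i B) sBZ; apply.
apply/row_subP => i; apply/centerZ => x.
by rewrite -ad_mxE -row_mul BD0 row0.
Qed.

Lemma ad_mx_sub_center x : two_step_nilpotent br -> (ad_mx br x <= Z)%MS.
Proof.
move=> nil2; apply/sub_centerP => y; apply/row_matrixP => i.
by rewrite row_mul row0 ad_mxE -[ad_mx br x]mul1mx row_mul ad_mxE nil2.
Qed.

End AdjointAndCenter.

Theorem mainTheorem3 (k : fieldType) (N : nat)
    (br : 'rV[k]_N -> 'rV[k]_N -> 'rV[k]_N)
    (W Z : 'M[k]_N) (M : 'M[k]_N) :
  [pchar k] =i pred0 ->
  is_lie_bracket br ->
  two_step_nilpotent br ->
  (forall v : 'rV[k]_N, (v <= Z)%MS <-> central br v) ->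
  (W :&: Z)%MS = 0 ->
  row_full (W + Z)%MS ->
  in_Lambda2 M ->
  (forall x : 'rV[k]_N, ad_wedge br x M = 0) ->
  Lambda2W_component W Z M = 0.
Proof.
move=> _ [br_linear _ _ _] nil2 centerZ WZ0 fullWZ _ invM.
rewrite /Lambda2W_component; set P := proj_mx W Z.
have adP0 x : ad_mx br x *m P = 0.
  exact: proj_mx_0 WZ0 (ad_mx_sub_center br_linear centerZ x nil2).
have Pad x : P *m ad_mx br x = ad_mx br x.
  apply: proj_mx_mul_id fullWZ _.
  exact: (proj1 (sub_centerP br_linear centerZ Z) (submx_refl Z)).
have PMad0 x : P^T *m M *m ad_mx br x = 0.
  have := congr1 (mulmx P^T) (invM x).
  by rewrite mulmxDr !mulmxA -trmx_mul adP0 trmx0 mul0mx add0r mulmx0.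
have : (P^T *m M *m P <= Z)%MS.
  by apply/(sub_centerP br_linear centerZ) => x; rewrite -mulmxA Pad.
by move/(proj_mx_0 WZ0); rewrite -mulmxA proj_mx_proj.
Qed.
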